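(* Let $G$ be a two-player stage game with $|V_1^{p,p}|=1$ and $|V_2^{p,p}|>1$. If $G\notin\mathcal{G}_{LS}^{p,p}$, then $G\notin\mathcal{G}_{LS}^{m,p}$.
   Context: A two-player stage game $G$ has finite nonempty action sets $A_1,A_2$ and payoffs $u_1,u_2:A_1\times A_2\to\mathbb{R}$, extended to mixed strategies by expectation. $G(T)$ is the $T$-round repetition with realized actions observed each round and payoffs the expected sum of stage payoffs; an SPE of $G(T)$ is a strategy profile whose continuation after every history of length $k<T$ is a Nash equilibrium of $G(T-k)$. Regimes: pure-pure ($p,p$): both players restricted to actions (in the stage game and in every round, including deviations); mixed-pure ($m,p$): player 1 may mix, player 2 uses only actions; mixed-mixed ($m,m$): both may mix. For regime $r$, $\mathrm{Nash}^r(G)$ is the set of stage-game profiles available in $r$ from which no player can profitably deviate unilaterally to a strategy available in $r$, and $V_i^r=\{u_i(\sigma):\sigma\in\mathrm{Nash}^r(G)\}$. Locally suboptimal behavior occurs in an SPE $\mu$ of $G(T)$ (regime $r$) if for some history $h$ of length $k<T$, $(\mu_1(h),\mu_2(h))\notin\mathrm{Nash}^r(G)$. $\mathcal{G}_{LS}^r$ is the set of stage games $G$ for which there exist $T\ge1$ and an SPE of $G(T)$ in regime $r$ in which locally suboptimal behavior occurs. *)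

From HB Require Import structures.
From mathcomp Require Import all_boot all_order all_algebra.
From mathcomp Require Import reals.
Set Implicit Arguments. Unset Strict Implicit. Unset Printing Implicit Defensive.
Import Order.TTheory GRing.Theory Num.Theory.
Local Open Scope ring_scope.

Section Game.
Variables (R : realType) (A1 A2 : finType).

Definition is_mixed (A : finType) (d : {ffun A -> R}) : Prop :=
  (forall a, 0 <= d a) /\ \sum_(a : A) d a = 1.

Definition is_pure (A : finType) (d : {ffun A -> R}) : Prop :=
  exists a : A, forall b : A, d b = (if b == a then 1 else 0).

(* A regime: (player 1 may mix, player 2 may mix).
   (p,p) = (false,false), (m,p) = (true,false), (m,m) = (true,true). *)
Definition regime := (bool * bool)%type.
Definition reg_pp : regime := (false, false).
Definition reg_mp : regime := (true, false).
Definition reg_mm : regime := (true, true).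

Definition avail (mix : bool) (A : finType) (d : {ffun A -> R}) : Prop :=
  if mix then is_mixed d else is_pure d.

Definition eu (u : A1 -> A2 -> R) (d1 : {ffun A1 -> R}) (d2 : {ffun A2 -> R}) : R :=
  \sum_(a1 : A1) \sum_(a2 : A2) d1 a1 * d2 a2 * u a1 a2.

Definition stageNash (r : regime) (u1 u2 : A1 -> A2 -> R)
    (d1 : {ffun A1 -> R}) (d2 : {ffun A2 -> R}) : Prop :=
  [/\ avail r.1 d1, avail r.2 d2,
      (forall d1', avail r.1 d1' -> eu u1 d1' d2 <= eu u1 d1 d2) &
      (forall d2', avail r.2 d2' -> eu u2 d1 d2' <= eu u2 d1 d2)].

(* x \in V_i^r, where u is the payoff u_i of player i *)
Definition inV (r : regime) (u1 u2 : A1 -> A2 -> R) (u : A1 -> A2 -> R) (x : R) : Prop :=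
  exists d1 d2, stageNash r u1 u2 d1 d2 /\ x = eu u d1 d2.

(* histories: sequences of realized action profiles, earliest first *)
Definition history := seq (A1 * A2)%type.

Definition strat (A : finType) := history -> {ffun A -> R}.

Definition avail_strat (mix : bool) (A : finType) (s : strat A) : Prop :=
  forall h, avail mix (s h).

Fixpoint pay (u : A1 -> A2 -> R) (n : nat) (s1 : strat A1) (s2 : strat A2)
    (h : history) : R :=
  match n with
  | 0 => 0
  | n'.+1 => \sum_(a1 : A1) \sum_(a2 : A2)
              s1 h a1 * s2 h a2 * (u a1 a2 + pay u n' s1 s2 (rcons h (a1, a2)))
  end.

Definition payoff (u : A1 -> A2 -> R) (n : nat) (s1 : strat A1) (s2 : strat A2) : R :=
  pay u n s1 s2 [::].

Definition cont (A : finType) (s : strat A) (h : history) : strat A :=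
  fun h' => s (h ++ h').

Definition repNash (r : regime) (u1 u2 : A1 -> A2 -> R) (n : nat)
    (s1 : strat A1) (s2 : strat A2) : Prop :=
  (forall s1', avail_strat r.1 s1' -> payoff u1 n s1' s2 <= payoff u1 n s1 s2) /\
  (forall s2', avail_strat r.2 s2' -> payoff u2 n s1 s2' <= payoff u2 n s1 s2).

Definition SPE (r : regime) (u1 u2 : A1 -> A2 -> R) (T : nat)
    (s1 : strat A1) (s2 : strat A2) : Prop :=
  [/\ avail_strat r.1 s1, avail_strat r.2 s2 &
      forall h : history, (size h < T)%N ->
        repNash r u1 u2 (T - size h) (cont s1 h) (cont s2 h)].

Definition in_GLS (r : regime) (u1 u2 : A1 -> A2 -> R) : Prop :=
  exists T : nat, (1 <= T)%N /\
    exists (s1 : strat A1) (s2 : strat A2), SPE r u1 u2 T s1 s2 /\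
      exists h : history, (size h < T)%N /\ ~ stageNash r u1 u2 (s1 h) (s2 h).

End Game.

From HB Require Import structures.
From mathcomp Require Import all_boot all_order all_algebra.
From mathcomp Require Import reals lra.
Import Order.TTheory GRing.Theory Num.Theory.
Local Open Scope ring_scope.
Set Implicit Arguments. Unset Strict Implicit.

(* 1. Reward/punishment: if at some pure profile (a1, a2) player 1 best
      responds but player 2 could gain by deviating, then, using two pure
      equilibria x, y that player 2 ranks strictly, the profile "play
      (a1, a2), then x forever if player 2 complied and y otherwise" is a
      pure SPE of G(N+1) for N large, so G is in G_LS^{p,p}.
   2. Hence, outside G_LS^{p,p}, any pure best response of player 1 is
      answered best by player 2; together with V_1^{p,p} = {v} this makes v
      player 1's maximal stage payoff, attained against every a2, and every
      profile worth v to player 1 a pure equilibrium.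
   3. In an SPE of the (m,p) regime player 1 can secure v in every round by
      a pure best reply, so the equilibrium gives exactly v per round; his
      mixture is then supported on profiles worth v, against which player
      2's pure action is a best reply, so every round is a stage equilibrium. *)

Definition point_mass (R : realType) (A : finType) (a : A) : {ffun A -> R} :=
  [ffun b => if b == a then 1 else 0].

Section StageExpectation.
Variables (R : realType) (A1 A2 : finType).

Lemma point_massE (A : finType) (a b : A) : point_mass R a b = if b == a then 1 else 0.
Proof. by rewrite ffunE. Qed.

Lemma point_mass_pure (A : finType) (a : A) : is_pure (point_mass R a).
Proof. by exists a => b; rewrite point_massE. Qed.

Lemma sum_point_mass (A : finType) (c : A) (F : A -> R) :
  \sum_(a : A) (if a == c then 1 else 0) * F a = F c.
Proof.
rewrite (bigD1 c) //= eqxx mul1r big1 ?addr0 // => a /negbTE ->.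
by rewrite mul0r.
Qed.

Lemma avail_mixed (mix : bool) (A : finType) (d : {ffun A -> R}) :
  avail mix d -> is_mixed d.
Proof.
case: mix => //= -[c Hc]; split=> [b|]; first by rewrite Hc; case: ifP.
by rewrite (eq_bigr _ (fun b _ => Hc b)) -(big_mkcond _ (fun b => 1)) big_pred1_eq.
Qed.

Lemma stageNash_mixed (r : regime) (u1 u2 : A1 -> A2 -> R)
    (d1 : {ffun A1 -> R}) (d2 : {ffun A2 -> R}) :
  stageNash r u1 u2 d1 d2 -> is_mixed d1 /\ is_mixed d2.
Proof. by case=> av1 av2 _ _; split; [exact: avail_mixed av1 | exact: avail_mixed av2]. Qed.

Lemma eu_add (f g : A1 -> A2 -> R) (d1 : {ffun A1 -> R}) (d2 : {ffun A2 -> R}) :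
  eu (fun a b => f a b + g a b) d1 d2 = eu f d1 d2 + eu g d1 d2.
Proof.
rewrite /eu -big_split; apply: eq_bigr => a _.
by rewrite -big_split; apply: eq_bigr => b _; rewrite mulrDr.
Qed.

Lemma eu_const (c : R) (d1 : {ffun A1 -> R}) (d2 : {ffun A2 -> R}) :
  is_mixed d1 -> is_mixed d2 -> eu (fun _ _ => c) d1 d2 = c.
Proof.
move=> [_ sum1] [_ sum2]; rewrite /eu.
under eq_bigr => a _ do rewrite -big_distrl -big_distrr /= sum2 mulr1.
by rewrite -big_distrl /= sum1 mul1r.
Qed.

Lemma ler_eu (f g : A1 -> A2 -> R) (d1 : {ffun A1 -> R}) (d2 : {ffun A2 -> R}) :
  is_mixed d1 -> is_mixed d2 -> (forall a b, f a b <= g a b) -> eu f d1 d2 <= eu g d1 d2.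
Proof.
move=> [pos1 _] [pos2 _] fg; apply: ler_sum => a _; apply: ler_sum => b _.
by apply: ler_wpM2l => //; apply: mulr_ge0.
Qed.

Lemma eq_eu (f g : A1 -> A2 -> R) (d1 : {ffun A1 -> R}) (d2 : {ffun A2 -> R}) :
  (forall a b, f a b = g a b) -> eu f d1 d2 = eu g d1 d2.
Proof. by move=> fg; apply: eq_bigr => a _; apply: eq_bigr => b _; rewrite fg. Qed.

Lemma eu_le_bound (u : A1 -> A2 -> R) (c : R)
    (d1 : {ffun A1 -> R}) (d2 : {ffun A2 -> R}) :
  is_mixed d1 -> is_mixed d2 -> (forall a b, u a b <= c) -> eu u d1 d2 <= c.
Proof. by move=> mix1 mix2 le_c; rewrite -(eu_const c mix1 mix2); exact: ler_eu. Qed.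

Lemma mixed_support_max (A : finType) (d : {ffun A -> R}) (f : A -> R) (v : R) :
  is_mixed d -> (forall a, f a <= v) -> \sum_(a : A) d a * f a = v ->
  forall a, d a = 0 \/ f a = v.
Proof.
move=> [pos sum1] le_v avg a.
have gap_sum : \sum_(b : A) d b * (v - f b) = 0.
  by rewrite (eq_bigr _ (fun b _ => mulrBr _ _ _)) sumrB avg -mulr_suml sum1 mul1r subrr.
have gap_ge0 b : true -> 0 <= d b * (v - f b) by rewrite mulr_ge0 // subr_ge0.
move/eqP: (psumr_eq0P gap_ge0 gap_sum (i:=a) isT); rewrite mulf_eq0 subr_eq0.
by case/orP=> /eqP; [left | right].
Qed.

Lemma eu_pure_r (u : A1 -> A2 -> R) (d1 : {ffun A1 -> R}) (d2 : {ffun A2 -> R}) (c : A2) :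
  (forall b, d2 b = if b == c then 1 else 0) -> eu u d1 d2 = \sum_(a : A1) d1 a * u a c.
Proof.
move=> Hd2; apply: eq_bigr => a _.
under eq_bigr => b _ do rewrite Hd2 (mulrC (d1 a)) -mulrA.
by rewrite sum_point_mass.
Qed.

Lemma eu_pure (u : A1 -> A2 -> R) (d1 : {ffun A1 -> R}) (d2 : {ffun A2 -> R})
    (c1 : A1) (c2 : A2) :
  (forall a, d1 a = if a == c1 then 1 else 0) ->
  (forall b, d2 b = if b == c2 then 1 else 0) -> eu u d1 d2 = u c1 c2.
Proof.
move=> Hd1 Hd2; rewrite (eu_pure_r _ _ Hd2).
by under eq_bigr => a _ do rewrite Hd1; rewrite sum_point_mass.
Qed.

Lemma eu_point_mass (u : A1 -> A2 -> R) (c1 : A1) (c2 : A2) :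
  eu u (point_mass R c1) (point_mass R c2) = u c1 c2.
Proof. exact: eu_pure (point_massE _) (point_massE _). Qed.

End StageExpectation.

Section RepeatedPayoff.
Variables (R : realType) (A1 A2 : finType).

Lemma payS (u : A1 -> A2 -> R) (n : nat) (s1 : strat R A1 A2 A1)
    (s2 : strat R A1 A2 A2) (h : history A1 A2) :
  pay u n.+1 s1 s2 h = eu (fun a b => u a b + pay u n s1 s2 (rcons h (a, b))) (s1 h) (s2 h).
Proof. by []. Qed.

Lemma pay_cont (u : A1 -> A2 -> R) (n : nat) (s1 : strat R A1 A2 A1)
    (s2 : strat R A1 A2 A2) (h h' : history A1 A2) :
  pay u n (cont s1 h) (cont s2 h) h' = pay u n s1 s2 (h ++ h').
Proof.
elim: n h' => [|n IH] h' //=.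
by apply: eq_bigr => a _; apply: eq_bigr => b _; rewrite IH rcons_cat.
Qed.

Section Bounds.
Variables (u : A1 -> A2 -> R) (s1 : strat R A1 A2 A1) (s2 : strat R A1 A2 A2).
Variables (h : history A1 A2) (M : R).
Hypothesis mixed_after : forall h', is_mixed (s1 (h ++ h')) /\ is_mixed (s2 (h ++ h')).

Lemma pay_le_const (n : nat) :
  (forall h', eu u (s1 (h ++ h')) (s2 (h ++ h')) <= M) -> pay u n s1 s2 h <= n%:R * M.
Proof.
elim: n h mixed_after => [|n IH] k mixed le_M; first by rewrite mul0r.
have [mixed1 mixed2] := mixed [::]; rewrite cats0 in mixed1 mixed2.
rewrite payS (eu_add u (fun a b => pay u n s1 s2 (rcons k (a, b)))).
rewrite -nat1r mulrDl mul1r lerD //; first by have := le_M [::]; rewrite cats0.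
rewrite -(eu_const (n%:R * M) mixed1 mixed2); apply: ler_eu => // a b.
by apply: IH => h'; rewrite -cats1 -catA; [exact: mixed | exact: le_M].
Qed.

Lemma pay_ge_const (n : nat) :
  (forall h', M <= eu u (s1 (h ++ h')) (s2 (h ++ h'))) -> n%:R * M <= pay u n s1 s2 h.
Proof.
elim: n h mixed_after => [|n IH] k mixed ge_M; first by rewrite mul0r.
have [mixed1 mixed2] := mixed [::]; rewrite cats0 in mixed1 mixed2.
rewrite payS (eu_add u (fun a b => pay u n s1 s2 (rcons k (a, b)))).
rewrite -nat1r mulrDl mul1r lerD //; first by have := ge_M [::]; rewrite cats0.
rewrite -(eu_const (n%:R * M) mixed1 mixed2); apply: ler_eu => // a b.
by apply: IH => h'; rewrite -cats1 -catA; [exact: mixed | exact: ge_M].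
Qed.

End Bounds.

Lemma stationary_repNash (r : regime) (u1 u2 : A1 -> A2 -> R) (n : nat)
    (s1 : strat R A1 A2 A1) (s2 : strat R A1 A2 A2)
    (d1 : {ffun A1 -> R}) (d2 : {ffun A2 -> R}) :
  (forall h, s1 h = d1) -> (forall h, s2 h = d2) -> stageNash r u1 u2 d1 d2 ->
  repNash r u1 u2 n s1 s2.
Proof.
move=> s1E s2E [av1 av2 best1 best2].
have [mixed1 mixed2] := (avail_mixed av1, avail_mixed av2).
split=> [s1' av1'|s2' av2']; rewrite /payoff.
- apply: (@le_trans _ _ (n%:R * eu u1 d1 d2)).
    by apply: pay_le_const => h'; rewrite s2E; [split=> //; exact: avail_mixed | exact: best1].
  by apply: pay_ge_const => h'; rewrite s1E s2E.
- apply: (@le_trans _ _ (n%:R * eu u2 d1 d2)).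
    by apply: pay_le_const => h'; rewrite s1E; [split=> //; exact: avail_mixed | exact: best2].
  by apply: pay_ge_const => h'; rewrite s1E s2E.
Qed.

End RepeatedPayoff.

Section RewardPunishment.
Variables (R : realType) (A1 A2 : finType) (u1 u2 : A1 -> A2 -> R).
Variables (a1 : A1) (a2 b2 : A2).
Variables (d1x d1y : {ffun A1 -> R}) (d2x d2y : {ffun A2 -> R}).
Hypothesis a1_best : forall b1, u1 b1 a2 <= u1 a1 a2.
Hypothesis b2_better : u2 a1 a2 < u2 a1 b2.
Hypothesis Nash_x : stageNash reg_pp u1 u2 d1x d2x.
Hypothesis Nash_y : stageNash reg_pp u1 u2 d1y d2y.
Hypothesis x_preferred : eu u2 d1y d2y < eu u2 d1x d2x.

(* Play [first] in round one; afterwards play the equilibrium x forever if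
   player 2 played a2 in round one, and the equilibrium y otherwise. *)
Definition reward_punish (A : finType) (first good bad : {ffun A -> R}) :
    strat R A1 A2 A :=
  fun h => match h with [::] => first | p :: _ => if p.2 == a2 then good else bad end.

Local Notation s1 := (reward_punish (point_mass R a1) d1x d1y).
Local Notation s2 := (reward_punish (point_mass R a2) d2x d2y).

Definition max_gain : R := \sum_(b : A2) `|u2 a1 b - u2 a1 a2|.

Lemma max_gain_ge (b : A2) : u2 a1 b - u2 a1 a2 <= max_gain.
Proof.
apply: le_trans (ler_norm _) _; rewrite /max_gain (bigD1 b) //= lerDl.
by apply: sumr_ge0 => ? _.
Qed.

(* Enough rounds of punishment outweigh any one-round gain. *)
Definition punish_length : nat :=
  Num.bound (max_gain / (eu u2 d1x d2x - eu u2 d1y d2y)).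

Lemma punish_length_deters :
  max_gain < punish_length%:R * (eu u2 d1x d2x - eu u2 d1y d2y).
Proof.
have gap_gt0 : 0 < eu u2 d1x d2x - eu u2 d1y d2y by rewrite subr_gt0.
rewrite -ltr_pdivrMr //; apply: archi_boundP; apply: divr_ge0; last exact: ltW.
by apply: sumr_ge0 => b _.
Qed.

Lemma reward_punish_pure (A : finType) (c : A) (good bad : {ffun A -> R}) :
  is_pure good -> is_pure bad -> avail_strat false (reward_punish (point_mass R c) good bad).
Proof. by move=> pure_good pure_bad [|p t] /=; [exact: point_mass_pure | case: ifP]. Qed.

(* After round one the profile is stationary at a stage equilibrium. *)
Lemma reward_punish_later (p : A1 * A2) (t : history A1 A2) (n : nat) :
  repNash reg_pp u1 u2 n (cont s1 (p :: t)) (cont s2 (p :: t)).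
Proof.
apply: (@stationary_repNash _ _ _ _ _ _ _ _ _
  (if p.2 == a2 then d1x else d1y) (if p.2 == a2 then d2x else d2y)) => //.
by case: ifP.
Qed.

(* Player 1 cannot gain: a1 is a best response today, and tomorrow's
   equilibrium does not depend on player 1's action. *)
Lemma reward_punish_root_p1 (n : nat) (s1' : strat R A1 A2 A1) :
  avail_strat false s1' -> payoff u1 n.+1 s1' s2 <= payoff u1 n.+1 s1 s2.
Proof.
move=> av1'; have [c c_played] := av1' [::].
have [_ _ best1x _] := Nash_x; have [mix1x mix2x] := stageNash_mixed Nash_x.
rewrite /payoff !payS (eu_pure _ c_played (point_massE _ _)) eu_point_mass.
apply: lerD; first exact: a1_best.
apply: (@le_trans _ _ (n%:R * eu u1 d1x d2x)).
  apply: pay_le_const => h' /=; rewrite eqxx; last exact: best1x.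
  by split=> //; exact: avail_mixed (av1' _).
by apply: pay_ge_const => h' /=; rewrite eqxx.
Qed.

Lemma reward_punish_root_p2 (s2' : strat R A1 A2 A2) :
  avail_strat false s2' ->
  payoff u2 punish_length.+1 s1 s2' <= payoff u2 punish_length.+1 s1 s2.
Proof.
move=> av2'; have [c c_played] := av2' [::].
have [_ _ _ best2x] := Nash_x; have [mix1x mix2x] := stageNash_mixed Nash_x.
have [_ _ _ best2y] := Nash_y; have [mix1y _] := stageNash_mixed Nash_y.
rewrite /payoff !payS (eu_pure _ (point_massE _ _) c_played) eu_point_mass.
have rewarded : punish_length%:R * eu u2 d1x d2x <= pay u2 punish_length s1 s2 [:: (a1, a2)].
  by apply: pay_ge_const => h' /=; rewrite eqxx.
apply: le_trans (lerD (lexx _) rewarded).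
have [->|c_dev] := eqVneq c a2.
  apply: lerD => //; apply: pay_le_const => h' /=; rewrite eqxx; last exact: best2x.
  by split=> //; exact: avail_mixed (av2' _).
have punished : pay u2 punish_length s1 s2' [:: (a1, c)] <= punish_length%:R * eu u2 d1y d2y.
  apply: pay_le_const => h' /=; rewrite (negbTE c_dev); last exact: best2y.
  by split=> //; exact: avail_mixed (av2' _).
have := max_gain_ge c; have := punish_length_deters; rewrite mulrBr; lra.
Qed.

Lemma reward_punish_root_not_Nash : ~ stageNash reg_pp u1 u2 (s1 [::]) (s2 [::]).
Proof.
move=> [_ _ _ best2]; have := best2 _ (point_mass_pure R b2).
by rewrite /= !eu_point_mass leNgt b2_better.
Qed.

Lemma LS_pp_of_deterred_deviation : in_GLS reg_pp u1 u2.
Proof.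
exists punish_length.+1; split=> //; exists s1, s2; split; last first.
  by exists [::]; split; last exact: reward_punish_root_not_Nash.
have [[pure1x pure2x _ _] [pure1y pure2y _ _]] := (Nash_x, Nash_y).
split; [exact: reward_punish_pure | exact: reward_punish_pure |].
move=> [_|p t _]; last exact: reward_punish_later.
by rewrite subn0; split; [exact: reward_punish_root_p1 | exact: reward_punish_root_p2].
Qed.

End RewardPunishment.

Section PurePlay.
Variables (R : realType) (A1 A2 : finType) (u1 u2 : A1 -> A2 -> R).

Lemma pure_profile_Nash (a1 : A1) (a2 : A2) :
  (forall b1, u1 b1 a2 <= u1 a1 a2) -> (forall b2, u2 a1 b2 <= u2 a1 a2) ->
  stageNash reg_pp u1 u2 (point_mass R a1) (point_mass R a2).
Proof.
move=> best1 best2; split; try exact: point_mass_pure.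
- by move=> d1 [c c_played]; rewrite (eu_pure _ c_played (point_massE _ _)) eu_point_mass.
- by move=> d2 [c c_played]; rewrite (eu_pure _ (point_massE _ _) c_played) eu_point_mass.
Qed.

(* Without local suboptimality in the (p,p) regime, and with two pure
   equilibria that player 2 values differently, a pure best response of
   player 1 is always answered by a best response of player 2: otherwise
   the reward/punishment profile exhibits locally suboptimal behavior. *)
Lemma best_replies_mutual :
  ~ in_GLS reg_pp u1 u2 ->
  (exists x y : R, [/\ inV reg_pp u1 u2 u2 x, inV reg_pp u1 u2 u2 y & x <> y]) ->
  forall (a1 : A1) (a2 : A2), (forall b1, u1 b1 a2 <= u1 a1 a2) ->
  forall b2, u2 a1 b2 <= u2 a1 a2.
Proof.
move=> no_LS [x [y [[d1x [d2x [Nash_x ->]]] [d1y [d2y [Nash_y ->]]] x_ne_y]]].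
move=> a1 a2 a1_best b2; rewrite leNgt; apply/negP => b2_better; apply: no_LS.
have [y_lt_x|x_lt_y|//] := ltgtP (eu u2 d1x d2x) (eu u2 d1y d2y).
- exact: LS_pp_of_deterred_deviation a1_best b2_better Nash_y Nash_x y_lt_x.
- exact: LS_pp_of_deterred_deviation a1_best b2_better Nash_x Nash_y x_lt_y.
Qed.

Lemma p1_payoff_max (a0 : A1) (v : R) :
  (forall x, inV reg_pp u1 u2 u1 x <-> x = v) ->
  (forall (a1 : A1) (a2 : A2), (forall b1, u1 b1 a2 <= u1 a1 a2) ->
     forall b2, u2 a1 b2 <= u2 a1 a2) ->
  (forall a1 a2, u1 a1 a2 <= v) /\ (forall a2, exists a1, u1 a1 a2 = v).
Proof.
move=> V1_is_v mutual.
have best_value a2 : exists2 a1, u1 a1 a2 = v & forall b1, u1 b1 a2 <= u1 a1 a2.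
  have [a1 _ a1_best] := @arg_maxP _ _ _ a0 xpredT (fun i => u1 i a2) isT.
  have a1_best' b1 : u1 b1 a2 <= u1 a1 a2 by exact: a1_best.
  exists a1 => //; apply/V1_is_v; exists (point_mass R a1), (point_mass R a2).
  by rewrite eu_point_mass; split=> //; exact: pure_profile_Nash (mutual _ _ a1_best').
split=> [b1 a2|a2]; last by have [a1 ? _] := best_value a2; exists a1.
by have [a1 <-] := best_value a2; apply.
Qed.

End PurePlay.

Section SubgamePerfection.
Variables (R : realType) (A1 A2 : finType) (u1 u2 : A1 -> A2 -> R).
Variables (r : regime) (T : nat) (s1 : strat R A1 A2 A1) (s2 : strat R A1 A2 A2).
Variables (v : R) (reply : {ffun A2 -> R} -> {ffun A1 -> R}).
Hypothesis spe : SPE r u1 u2 T s1 s2.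
Hypothesis u1_le_v : forall a1 a2, u1 a1 a2 <= v.
Hypothesis reply_secures :
  forall d2, avail r.2 d2 -> avail r.1 (reply d2) /\ v <= eu u1 (reply d2) d2.

Lemma spe_mixed (h : history A1 A2) : is_mixed (s1 h) /\ is_mixed (s2 h).
Proof. by have [av1 av2 _] := spe; split; apply: avail_mixed; [exact: av1 | exact: av2]. Qed.

(* In every subgame player 1 earns the maximal payoff [v] per round: more is
   impossible, and less is ruled out by the deviation to [reply]. *)
Lemma spe_p1_continuation (h : history A1 A2) :
  (size h <= T)%N -> pay u1 (T - size h) s1 s2 h = (T - size h)%:R * v.
Proof.
move=> h_le_T; have [h_lt_T|h_ge_T] := ltnP (size h) T; last first.
  have /eqP -> : (T - size h == 0)%N by rewrite subn_eq0.
  by rewrite mul0r.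
have [_ _ subgame] := spe; have [best1 _] := subgame h h_lt_T.
apply: le_anti; apply/andP; split.
  apply: pay_le_const => [h'|h']; first exact: spe_mixed.
  by have [mix1 mix2] := spe_mixed (h ++ h'); exact: eu_le_bound.
pose s1' : strat R A1 A2 A1 := fun k => reply (s2 (h ++ k)).
have [_ av2 _] := spe.
have av1' : avail_strat r.1 s1' by move=> k; exact: (reply_secures (av2 (h ++ k))).1.
have := best1 s1' av1'; rewrite /payoff pay_cont cats0; apply: le_trans.
apply: pay_ge_const => k; last exact: (reply_secures (av2 _)).2.
by split; [exact: avail_mixed (av1' _) | exact: (spe_mixed _).2].
Qed.

Lemma spe_p1_stage (h : history A1 A2) :
  (size h < T)%N -> eu u1 (s1 h) (s2 h) = v.
Proof.
move=> h_lt_T; have [mix1 mix2] := spe_mixed h.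
have next_value a b : pay u1 (T - (size h).+1) s1 s2 (rcons h (a, b)) =
    (T - (size h).+1)%:R * v.
  by rewrite -(size_rcons h (a, b)) spe_p1_continuation // size_rcons.
have := spe_p1_continuation (ltnW h_lt_T); rewrite -subnSK // payS eu_add.
by rewrite (eq_eu _ _ next_value) eu_const // -nat1r mulrDl mul1r => /addIr.
Qed.

End SubgamePerfection.

Section PlayerTwoPure.
Variables (R : realType) (A1 A2 : finType) (u1 u2 : A1 -> A2 -> R) (v : R).
Hypothesis u1_le_v : forall a1 a2, u1 a1 a2 <= v.

Lemma pure_reply_exists (a0 : A1) :
  (forall a2, exists a1, u1 a1 a2 = v) ->
  exists reply : {ffun A2 -> R} -> {ffun A1 -> R},
    forall d2, is_pure d2 -> is_mixed (reply d2) /\ v <= eu u1 (reply d2) d2.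
Proof.
move=> attained.
exists (fun d2 => point_mass R [arg max_(i > a0) eu u1 (point_mass R i) d2]%O).
move=> d2 [a a_played]; split; first exact: (@avail_mixed _ false _ _ (point_mass_pure R _)).
case: (@arg_maxP _ _ _ a0 xpredT (fun i => eu u1 (point_mass R i) d2)) => // i _ i_best.
have [j <-] := attained a; have := i_best j isT.
by rewrite !(eu_pure _ (point_massE _ _) a_played).
Qed.

(* When player 2 plays a pure action [a] and player 1's mixture earns the
   maximal payoff [v], player 1 only uses actions worth [v]; if those are
   answered best by [a], the profile is a stage equilibrium. *)
Lemma stageNash_of_max_value (mix : bool) (d1 : {ffun A1 -> R})
    (d2 : {ffun A2 -> R}) (a : A2) :
  avail mix d1 -> (forall b, d2 b = if b == a then 1 else 0) -> eu u1 d1 d2 = v ->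
  (forall a1, u1 a1 a = v -> forall b2, u2 a1 b2 <= u2 a1 a) ->
  stageNash (mix, false) u1 u2 d1 d2.
Proof.
move=> av1 a_played value_v v_mutual; have mix1 := avail_mixed av1.
have mix2 : is_mixed d2 by apply: (@avail_mixed _ false); exists a.
split=> //= [|d1' av1'|d2' [b b_played]]; first by exists a.
  by rewrite value_v; apply: eu_le_bound => //; exact: avail_mixed av1'.
rewrite (eu_pure_r _ _ b_played) (eu_pure_r _ _ a_played); apply: ler_sum => a1 _.
rewrite (eu_pure_r _ _ a_played) in value_v.
have [->|a1_max] := mixed_support_max mix1 (u1_le_v ^~ a) value_v a1; first by rewrite !mul0r.
by apply: ler_wpM2l; [exact: mix1.1 | exact: v_mutual].
Qed.

End PlayerTwoPure.

Theorem mainTheorem9 (R : realType) (A1 A2 : finType)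
    (hA1 : (0 < #|A1|)%N) (hA2 : (0 < #|A2|)%N)
    (u1 u2 : A1 -> A2 -> R)
    (hV1 : exists v : R, forall x : R, inV reg_pp u1 u2 u1 x <-> x = v)
    (hV2 : exists x y : R, [/\ inV reg_pp u1 u2 u2 x, inV reg_pp u1 u2 u2 y & x <> y]) :
  ~ in_GLS reg_pp u1 u2 -> ~ in_GLS reg_mp u1 u2.
Proof.
move=> no_LS_pp [T [_ [s1 [s2 [spe [h [h_lt_T not_Nash]]]]]]]; apply: not_Nash.
have [a0 _] := card_gt0P hA1; have [v V1_is_v] := hV1.
have mutual := best_replies_mutual no_LS_pp hV2.
have [u1_le_v attained] := p1_payoff_max a0 V1_is_v mutual.
have [reply reply_secures] := pure_reply_exists a0 attained.
have [_ pure2 _] := spe; have [a a_played] := pure2 h.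
have [av1 _ _] := spe; apply: (stageNash_of_max_value u1_le_v (av1 h) a_played).
  exact: spe_p1_stage spe u1_le_v reply_secures h h_lt_T.
by move=> a1 value_v; apply: mutual => b1; rewrite value_v; exact: u1_le_v.
Qed.
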